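(* Let $y_1,y_2,y_3,y_4$ be the corners of the partially folded Miura parallelogram $y^\sigma_\omega(\Omega)$ (for some admissible $\omega\in[-\pi,\pi]$, $\sigma\in\{+,-\}$), and let $u_a=y_3-y_4$, $u_b=y_2-y_1$, $v_a=y_1-y_4$, $v_b=y_2-y_3$. Let $e\in\mathbb{S}^2$, $z\in\mathbb{R}^3$ with $z\cdot e=0$, $\theta_1,\theta_2\in(-\pi,\pi]$, $\tau_1,\tau_2\in\mathbb{R}$, let $R_\theta$ denote the right-hand rotation about $e$ by angle $\theta$, $P_e=I-e\otimes e$, and $g_i(x)=R_{\theta_i}(x-z)+\tau_i e+z$ ($i=1,2$). Then the conditions $$g_1(y_4)=y_1,\quad g_1(y_3)=y_2,\quad g_2(y_1)=y_2,\quad g_2(y_4)=y_3,\quad \theta_1=0,\quad\theta_2\neq0$$ hold if and only if $$\theta_1=0,\ \ u_a=u_b,\ \ \tau_2=u_a\cdot e,\ \ v_a=v_b,\ \ v_b=\tau_1e,\ \ (I-R_{\theta_2})z=P_e(y_2-R_{\theta_2}y_1),\ \ \theta_2\neq0.$$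
   Context: Setting. $\{e_1,e_2,e_3\}$ is the standard basis of $\mathbb{R}^3$. Fix $\eta\in(0,\pi)$, $l>0$; set $x_1=0$, $x_2=e_1$, $x_4=l(\cos\eta\,e_1+\sin\eta\,e_2)$, $x_3=x_2+x_4$, and let $\Omega$ be the planar parallelogram with these corners. Fix $\lambda_1,\lambda_2\in(0,1)$ with $(\lambda_2-1)\lambda_2l^2=(\lambda_1-1)\lambda_1$ and let $x_0=\lambda_1x_2+\lambda_2x_4$ (the interior crease vertex). Let $t_i=(x_i-x_0)/|x_i-x_0|$, $n_i=-(t_i\cdot e_2)e_1+(t_i\cdot e_1)e_2$, $\alpha=\arccos(t_1\cdot t_2)$, $\beta=\arccos(t_2\cdot t_3)$, and $R_i(\gamma)=t_i\otimes t_i+\cos\gamma(n_i\otimes n_i+e_3\otimes e_3)+\sin\gamma(e_3\otimes n_i-n_i\otimes e_3)$. Let $\mathcal{A}=\emptyset$ if $\alpha=\beta=\pi/2$, $\{-\}$ if $\alpha=\beta\ne\pi/2$, $\{+\}$ if $\alpha=\pi-\beta\neq\pi/2$, $\{+,-\}$ otherwise. For $\sigma\in\{+,-\}$ (identified with $\pm1$) and $\omega\in[-\pi,\pi]$ the folding angles are: if $\sigma\in\mathcal{A}$, $\gamma_1=-\sigma\bar\gamma_3^\sigma(\omega)$, $\gamma_2=\sigma\omega$, $\gamma_3=\bar\gamma_3^\sigma(\omega)$, $\gamma_4=\omega$ with $\bar\gamma_3^{\sigma}(\omega)=\mathrm{sign}((\cos\alpha-\sigma\cos\beta)\omega)\arccos\big(\frac{(\sigma1-\cos\alpha\cos\beta)\cos\omega+\sin\alpha\sin\beta}{(\sigma1-\cos\alpha\cos\beta)+\sin\alpha\sin\beta\cos\omega}\big)$;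 if $\sigma\notin\mathcal{A}$ (possible only for $\sigma=+,\alpha=\beta$ or $\sigma=-,\alpha=\pi-\beta$), $\gamma_1=\gamma_3=0,\gamma_2=\gamma_4=\omega$ when $\sigma=+$ and $\gamma_1=\gamma_3=\omega,\gamma_2=\gamma_4=0$ when $\sigma=-$. The folded parallelogram $y^\sigma_\omega(\Omega)$ is the piecewise-rigid image of $\Omega$ that is the identity on the triangle $\mathrm{conv}\{x_1,x_0,x_2\}$, equals $x\mapsto R_2(\gamma_2)(x-x_0)+x_0$ on $\mathrm{conv}\{x_2,x_0,x_3\}$, $x\mapsto R_2(\gamma_2)R_3(\gamma_3)(x-x_0)+x_0$ on $\mathrm{conv}\{x_3,x_0,x_4\}$ and $x\mapsto R_1(-\gamma_1)(x-x_0)+x_0$ on $\mathrm{conv}\{x_4,x_0,x_1\}$. Its corners are $y_1=x_1$, $y_2=x_2$, $y_3=x_0+R_2(\gamma_2)(x_3-x_0)$, $y_4=x_0+R_2(\gamma_2)R_3(\gamma_3)(x_4-x_0)$. *)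

From Stdlib Require Import Reals Lra ClassicalEpsilon.
Open Scope R_scope.

Record vec3 := V3 { vx : R; vy : R; vz : R }.

Definition vadd (a b : vec3) := V3 (vx a + vx b) (vy a + vy b) (vz a + vz b).
Definition vscale (c : R) (a : vec3) := V3 (c * vx a) (c * vy a) (c * vz a).
Definition vopp (a : vec3) := vscale (-1) a.
Definition vsub (a b : vec3) := vadd a (vopp b).
Definition vdot (a b : vec3) := vx a * vx b + vy a * vy b + vz a * vz b.
Definition vnorm (a : vec3) := sqrt (vdot a a).
Definition vcross (a b : vec3) :=
  V3 (vy a * vz b - vz a * vy b) (vz a * vx b - vx a * vz b) (vx a * vy b - vy a * vx b).

Definition e1 := V3 1 0 0.
Definition e2 := V3 0 1 0.
Definition e3 := V3 0 0 1.

Definition tens (a b x : vec3) : vec3 := vscale (vdot b x) a.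

Section Miura.
Variables (eta l lam1 lam2 : R).

Definition mx1 := V3 0 0 0.
Definition mx2 := e1.
Definition mx4 := vscale l (vadd (vscale (cos eta) e1) (vscale (sin eta) e2)).
Definition mx3 := vadd mx2 mx4.
Definition mx0 := vadd (vscale lam1 mx2) (vscale lam2 mx4).

Definition tvec (xi : vec3) := vscale (/ vnorm (vsub xi mx0)) (vsub xi mx0).
Definition t1 := tvec mx1.
Definition t2 := tvec mx2.
Definition t3 := tvec mx3.
Definition t4 := tvec mx4.
Definition nvec (t : vec3) := vadd (vscale (- vdot t e2) e1) (vscale (vdot t e1) e2).

Definition alpha := acos (vdot t1 t2).
Definition beta := acos (vdot t2 t3).

Definition Rfold (t : vec3) (g : R) (x : vec3) : vec3 :=
  let n := nvec t in
  vadd (tens t t x)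
   (vadd (vscale (cos g) (vadd (tens n n x) (tens e3 e3 x)))
         (vscale (sin g) (vsub (tens e3 n x) (tens n e3 x)))).

Inductive sgn_t := Splus | Sminus.
Definition sval (s : sgn_t) : R := match s with Splus => 1 | Sminus => -1 end.

Definition inA (s : sgn_t) : Prop :=
  ~ (alpha = PI / 2 /\ beta = PI / 2) /\
  (alpha = beta /\ alpha <> PI / 2 -> s = Sminus) /\
  (alpha = PI - beta /\ alpha <> PI / 2 -> s = Splus).

Definition rsign (x : R) : R := if Rlt_dec 0 x then 1 else if Rlt_dec x 0 then -1 else 0.

Definition gamma3bar (s : sgn_t) (w : R) : R :=
  let sg := sval s in
  rsign ((cos alpha - sg * cos beta) * w) *
  acos (((sg - cos alpha * cos beta) * cos w + sin alpha * sin beta) /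
        ((sg - cos alpha * cos beta) + sin alpha * sin beta * cos w)).

Definition gammas (s : sgn_t) (w : R) : R * R * R * R :=
  if excluded_middle_informative (inA s) then
    (- sval s * gamma3bar s w, sval s * w, gamma3bar s w, w)
  else match s with
       | Splus => (0, w, 0, w)
       | Sminus => (w, 0, w, 0)
       end.

Definition gam2 s w := snd (fst (fst (gammas s w))).
Definition gam3 s w := snd (fst (gammas s w)).

Definition corners (s : sgn_t) (w : R) : vec3 * vec3 * vec3 * vec3 :=
  (mx1, mx2,
   vadd mx0 (Rfold t2 (gam2 s w) (vsub mx3 mx0)),
   vadd mx0 (Rfold t2 (gam2 s w) (Rfold t3 (gam3 s w) (vsub mx4 mx0)))).
End Miura.

(* right-hand rotation about the unit axis e by angle θ (Rodrigues) *)
Definition rotE (e : vec3) (th : R) (x : vec3) : vec3 :=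
  vadd (vscale (cos th) x)
   (vadd (vscale (sin th) (vcross e x)) (vscale ((1 - cos th) * vdot e x) e)).

Definition projE (e x : vec3) : vec3 := vsub x (tens e e x).

Definition screw (e z : vec3) (th tau : R) (x : vec3) : vec3 :=
  vadd (vadd (rotE e th (vsub x z)) (vscale tau e)) z.

(** Y4] (and does not even need [z ⊥ e]).  With [θ1 = 0] the map [g1]
    is the translation by [τ1 e], so [g1 Y4 = Y1] and [g1 Y3 = Y2] say
    [va = vb = τ1 e], which also forces [ua = ub].  A screw motion about [e]
    commutes with translations along [e], so once [Y1 = Y4 + τ1 e] and
    [Y2 = Y3 + τ1 e] the condition [g2 Y4 = Y3] is the same as [g2 Y1 = Y2].
    Finally [g x = y] splits into its axial part [τ = e·(y - x)], because the
    rotation fixes [e]-components, and its transversal part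
    [(I - R) z = P_e (y - R x)]. *)

From Stdlib Require Import Reals Lra.
Open Scope R_scope.

Ltac vec3_ring :=
  repeat match goal with v : vec3 |- _ => destruct v end;
  unfold rotE, screw, projE, tens, vsub, vadd, vopp, vscale, vcross, vdot;
  simpl; f_equal; ring.

Lemma vec3_eq_iff (a b : vec3) :
  a = b <-> vx a = vx b /\ vy a = vy b /\ vz a = vz b.
Proof.
  split.
  - intros ->; auto.
  - destruct a, b; simpl; intros (-> & -> & ->); reflexivity.
Qed.

Lemma vdot_comm (a b : vec3) : vdot a b = vdot b a.
Proof. unfold vdot; ring. Qed.

Lemma vdot_add_r (a b c : vec3) : vdot a (vadd b c) = vdot a b + vdot a c.
Proof. unfold vdot, vadd; simpl; ring. Qed.

Lemma vdot_sub_r (a b c : vec3) : vdot a (vsub b c) = vdot a b - vdot a c.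
Proof. unfold vdot, vsub, vadd, vopp, vscale; simpl; ring. Qed.

Lemma vdot_scale_r (a b : vec3) (t : R) : vdot a (vscale t b) = t * vdot a b.
Proof. unfold vdot, vscale; simpl; ring. Qed.

Lemma vnorm1_vdot (e : vec3) : vnorm e = 1 -> vdot e e = 1.
Proof.
  unfold vnorm; intro He.
  assert (Hpos : 0 <= vdot e e) by (unfold vdot; nra).
  rewrite <- (sqrt_sqrt _ Hpos), He; ring.
Qed.

Lemma vadd_eq_vsub (x d y : vec3) : vadd x d = y <-> vsub y x = d.
Proof. split; intros <-; vec3_ring. Qed.

Lemma vadd_reg_r (a b c : vec3) : vadd a c = vadd b c -> a = b.
Proof. rewrite !vec3_eq_iff; destruct a, b, c; simpl; lra. Qed.

Lemma vsub_parallelogram (a b c d : vec3) :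
  vsub c d = vsub b a <-> vsub a d = vsub b c.
Proof. rewrite !vec3_eq_iff; destruct a, b, c, d; simpl; intuition lra. Qed.

Lemma rotE_add (e : vec3) (th : R) (a b : vec3) :
  rotE e th (vadd a b) = vadd (rotE e th a) (rotE e th b).
Proof. vec3_ring. Qed.

Lemma rotE_sub (e : vec3) (th : R) (a b : vec3) :
  rotE e th (vsub a b) = vsub (rotE e th a) (rotE e th b).
Proof. vec3_ring. Qed.

Lemma rotE_scale (e : vec3) (th t : R) (a : vec3) :
  rotE e th (vscale t a) = vscale t (rotE e th a).
Proof. vec3_ring. Qed.

Lemma rotE_axis (e : vec3) (th : R) : vdot e e = 1 -> rotE e th e = e.
Proof.
  intro Hee; unfold rotE; rewrite Hee.
  destruct e; unfold vcross, vadd, vscale; simpl; f_equal; ring.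
Qed.

Lemma vdot_axis_rotE (e : vec3) (th : R) (x : vec3) :
  vdot e e = 1 -> vdot e (rotE e th x) = vdot e x.
Proof.
  intro Hee; unfold rotE.
  rewrite !vdot_add_r, !vdot_scale_r, Hee.
  replace (vdot e (vcross e x)) with 0 by (unfold vdot, vcross; simpl; ring).
  ring.
Qed.

Lemma screw_0 (e z : vec3) (tau : R) (x : vec3) :
  screw e z 0 tau x = vadd x (vscale tau e).
Proof. unfold screw, rotE; rewrite cos_0, sin_0; vec3_ring. Qed.

Lemma screw_add_axis (e z : vec3) (th tau t : R) (x : vec3) :
  vdot e e = 1 ->
  screw e z th tau (vadd x (vscale t e)) = vadd (screw e z th tau x) (vscale t e).
Proof.
  intro Hee; unfold screw.
  replace (vsub (vadd x (vscale t e)) z) with (vadd (vsub x z) (vscale t e))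
    by vec3_ring.
  rewrite rotE_add, rotE_scale, rotE_axis by exact Hee.
  vec3_ring.
Qed.

Lemma screw_eq_offset (e z : vec3) (th tau : R) (x y : vec3) :
  screw e z th tau x = y <->
  vsub y (rotE e th x) = vadd (vsub z (rotE e th z)) (vscale tau e).
Proof.
  unfold screw; rewrite rotE_sub.
  generalize (rotE e th x) (rotE e th z); intros rx rz.
  rewrite !vec3_eq_iff; destruct e, x, y, z, rx, rz; simpl; intuition lra.
Qed.

Lemma screw_eq_iff (e z : vec3) (th tau : R) (x y : vec3) :
  vdot e e = 1 ->
  screw e z th tau x = y <->
  tau = vdot e (vsub y x) /\
  vsub z (rotE e th z) = projE e (vsub y (rotE e th x)).
Proof.
  intro Hee.
  assert (Haxial : vdot e (vsub y (rotE e th x)) = vdot e (vsub y x))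
    by now rewrite !vdot_sub_r, vdot_axis_rotE.
  assert (Hoffset : vdot e (vsub z (rotE e th z)) = 0)
    by (rewrite vdot_sub_r, vdot_axis_rotE by exact Hee; ring).
  rewrite screw_eq_offset; unfold projE, tens; rewrite <- Haxial.
  revert Hoffset; generalize (vsub y (rotE e th x)) (vsub z (rotE e th z)).
  intros d o Hoffset; split.
  - intros ->.
    rewrite vdot_add_r, vdot_scale_r, Hoffset, Hee.
    split; [ring | vec3_ring].
  - intros [-> ->]; vec3_ring.
Qed.

Lemma screw_pair_iff (e z Y1 Y2 Y3 Y4 : vec3) (th1 th2 tau1 tau2 : R) :
  vnorm e = 1 ->
  (screw e z th1 tau1 Y4 = Y1 /\ screw e z th1 tau1 Y3 = Y2 /\
   screw e z th2 tau2 Y1 = Y2 /\ screw e z th2 tau2 Y4 = Y3 /\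
   th1 = 0 /\ th2 <> 0)
  <->
  (th1 = 0 /\ vsub Y3 Y4 = vsub Y2 Y1 /\ tau2 = vdot (vsub Y3 Y4) e /\
   vsub Y1 Y4 = vsub Y2 Y3 /\ vsub Y2 Y3 = vscale tau1 e /\
   vsub z (rotE e th2 z) = projE e (vsub Y2 (rotE e th2 Y1)) /\ th2 <> 0).
Proof.
  intros He; pose proof (vnorm1_vdot e He) as Hee.
  split.
  - intros (H41 & H32 & H12 & _ & -> & Hth2).
    rewrite screw_0, vadd_eq_vsub in H41, H32.
    apply screw_eq_iff in H12 as [Htau Hoffset]; [|exact Hee].
    assert (Hu : vsub Y3 Y4 = vsub Y2 Y1)
      by (apply vsub_parallelogram; congruence).
    rewrite Hu, vdot_comm.
    repeat split; congruence.
  - intros (-> & Hu & Htau & Hv & Hvb & Hoffset & Hth2).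
    rewrite Hu, vdot_comm in Htau.
    assert (H12 : screw e z th2 tau2 Y1 = Y2) by now apply screw_eq_iff.
    assert (HY1 : vadd Y4 (vscale tau1 e) = Y1)
      by (apply vadd_eq_vsub; congruence).
    assert (HY2 : vadd Y3 (vscale tau1 e) = Y2) by now apply vadd_eq_vsub.
    rewrite !screw_0.
    repeat split; try assumption.
    apply (vadd_reg_r _ _ (vscale tau1 e)).
    rewrite <- screw_add_axis, HY1, HY2 by exact Hee.
    exact H12.
Qed.

Theorem mainTheorem4
  (eta l lam1 lam2 : R)
  (Heta : 0 < eta < PI) (Hl : 0 < l)
  (Hlam1 : 0 < lam1 < 1) (Hlam2 : 0 < lam2 < 1)
  (Hlam : (lam2 - 1) * lam2 * l ^ 2 = (lam1 - 1) * lam1)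
  (s : sgn_t) (w : R) (Hw : - PI <= w <= PI)
  (e z : vec3) (He : vnorm e = 1) (Hz : vdot z e = 0)
  (th1 th2 tau1 tau2 : R)
  (Hth1 : - PI < th1 <= PI) (Hth2 : - PI < th2 <= PI) :
  let '(Y1, Y2, Y3, Y4) := corners eta l lam1 lam2 s w in
  let ua := vsub Y3 Y4 in
  let ub := vsub Y2 Y1 in
  let va := vsub Y1 Y4 in
  let vb := vsub Y2 Y3 in
  let g1 := screw e z th1 tau1 in
  let g2 := screw e z th2 tau2 in
  (g1 Y4 = Y1 /\ g1 Y3 = Y2 /\ g2 Y1 = Y2 /\ g2 Y4 = Y3 /\ th1 = 0 /\ th2 <> 0)
  <->
  (th1 = 0 /\ ua = ub /\ tau2 = vdot ua e /\ va = vb /\ vb = vscale tau1 e /\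
   vsub z (rotE e th2 z) = projE e (vsub Y2 (rotE e th2 Y1)) /\ th2 <> 0).
Proof.
  destruct (corners eta l lam1 lam2 s w) as [[[Y1 Y2] Y3] Y4].
  exact (screw_pair_iff e z Y1 Y2 Y3 Y4 th1 th2 tau1 tau2 He).
Qed.
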